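(* Let $\mathcal{X}$ be a measurable space, $\mathcal{G}$ a class of measurable classifiers $g:\mathcal{X}\to\{-1,+1\}$, and $p\in(0,1)$ a given number. Let $(X'_1,Y'_1),\ldots,(X'_n,Y'_n)$ be i.i.d. copies of a pair $(X',Y')\in\mathcal{X}\times\{-1,+1\}$ with $q=\mathbb{P}\{Y'=+1\}$. Let $\varepsilon\in(0,1/2)$ and suppose $q\in(\varepsilon,1-\varepsilon)$. Let $n'_+=\sum_{i=1}^n\mathbb{I}\{Y'_i=+1\}$, $n'_-=n-n'_+$, and define for $g\in\mathcal{G}$ $$\widetilde{\mathcal{R}}_{w^*,n}(g)=\frac{2p}{q}\frac{1}{n}\sum_{i:Y'_i=+1}\mathbb{I}\{g(X'_i)=-1\}+\frac{1}{1-q}\frac{1}{n}\sum_{i:Y'_i=-1}\mathbb{I}\{g(X'_i)=+1\},$$ $$\widetilde{\mathcal{R}}_{\widehat{w}^*,n}(g)=\frac{2p}{n'_+}\sum_{i:Y'_i=+1}\mathbb{I}\{g(X'_i)=-1\}+\frac{1}{n'_-}\sum_{i:Y'_i=-1}\mathbb{I}\{g(X'_i)=+1\}.$$ Then for any $\delta\in(0,1)$, as soon as $n\ge 2\log(2/\delta)/\varepsilon^2$, with probability larger than $1-\delta$, $$\sup_{g\in\mathcal{G}}\left|\widetilde{\mathcal{R}}_{\widehat{w}^*,n}(g)-\widetilde{\mathcal{R}}_{w^*,n}(g)\right|\le\frac{2(2p+1)}{\varepsilon^2}\sqrt{\frac{\log(2/\delta)}{2n}}.$$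
   Context: $\mathbb{I}\{\cdot\}$ denotes the indicator function. In the paper's application, $Y'=+1$ marks positive examples and $Y'=-1$ marks unlabeled examples. *)

From HB Require Import structures.
From mathcomp Require Import all_boot all_order all_algebra.
From mathcomp Require Import all_classical all_reals all_analysis.
Set Implicit Arguments. Unset Strict Implicit. Unset Printing Implicit Defensive.
Import Order.TTheory GRing.Theory Num.Theory.
Local Open Scope classical_set_scope.
Local Open Scope ring_scope.

(* Mutual independence of a finite family of random elements Z_0..Z_{n-1}
   with values in a measurable space U: the product rule holds for every
   choice of measurable sets (taking B_i = setT gives all subfamilies). *)
Definition mutually_independent {d} {T : measurableType d} {R : realType}
  (P : probability T R) {d'} {U : measurableType d'} (n : nat)
  (Z : 'I_n -> T -> U) : Prop :=
  forall B : 'I_n -> set U, (forall i, measurable (B i)) ->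
    fine (P (\bigcap_(i in [set: 'I_n]) (Z i @^-1` B i)))
    = \prod_(i < n) fine (P (Z i @^-1` B i)).

Definition same_law {d} {T : measurableType d} {R : realType}
  (P : probability T R) {d'} {U : measurableType d'} (Z W : T -> U) : Prop :=
  forall B : set U, measurable B -> P (Z @^-1` B) = P (W @^-1` B).

Definition Spos {X : Type} {R : realType} (n : nat) (Xs : 'I_n -> X)
  (Ys : 'I_n -> R) (g : X -> R) : R :=
  \sum_(i < n | Ys i == 1) (g (Xs i) == -1)%:R.

Definition Sneg {X : Type} {R : realType} (n : nat) (Xs : 'I_n -> X)
  (Ys : 'I_n -> R) (g : X -> R) : R :=
  \sum_(i < n | Ys i == -1) (g (Xs i) == 1)%:R.

Definition npos {R : realType} (n : nat) (Ys : 'I_n -> R) : R :=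
  \sum_(i < n | Ys i == 1) 1.

Definition nneg {R : realType} (n : nat) (Ys : 'I_n -> R) : R :=
  n%:R - npos Ys.

Definition Rtilde_w {X : Type} {R : realType} (p q : R) (n : nat)
  (Xs : 'I_n -> X) (Ys : 'I_n -> R) (g : X -> R) : R :=
  2 * p / q * (1 / n%:R) * Spos Xs Ys g
  + 1 / (1 - q) * (1 / n%:R) * Sneg Xs Ys g.

Definition Rtilde_what {X : Type} {R : realType} (p : R) (n : nat)
  (Xs : 'I_n -> X) (Ys : 'I_n -> R) (g : X -> R) : R :=
  2 * p / npos Ys * Spos Xs Ys g + 1 / nneg Ys * Sneg Xs Ys g.

From HB Require Import structures.
From mathcomp Require Import all_boot all_order all_algebra.
From mathcomp Require Import all_classical all_reals all_analysis.
From mathcomp Require Import ring lra.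
Import Order.TTheory GRing.Theory Num.Theory.
Local Open Scope classical_set_scope.
Local Open Scope ring_scope.

(* The plug-in risk differs from the oracle one only through n'_+ and n'_-
   replacing n q and n (1 - q); since |n'_- - n (1 - q)| = |n'_+ - n q|, on the
   event |n'_+ - n q| <= n s each of the two terms moves by at most its weight
   times s / eps.  Under the i.i.d. hypothesis n'_+ is binomial(n, q), and the
   Chernoff bound with exp(x) <= 1 + x + 2 x^2 on [0, 1/2] bounds each tail of
   n'_+ by exp(-n s^2 / 8).  For s = 2 sqrt(log(2/delta) / (2n)) / eps this is
   exp(-log(2/delta) / (4 eps^2)) <= delta / 2, because eps < 1/2. *)

Lemma expR_le1DxDsqr {R : realType} (x : R) :
  0 <= x <= 1 / 2 -> expR x <= 1 + x + 2 * x ^+ 2.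
Proof.
move=> /andP[x0 x1].
have hE : expR x * (1 - x) <= 1.
  by rewrite -[X in _ <= X](expRxMexpNx_1 x) ler_pM2l ?expR_gt0 // expR_ge1Dx.
have := expR_gt0 x; nra.
Qed.

Lemma sum_tail_le_expR {R : realType} {I : finType} (w f : I -> R) (l m : R) :
  0 <= l -> (forall i, 0 <= w i) ->
  \sum_(i | m < f i) w i <= expR (- (l * m)) * \sum_i w i * expR (l * f i).
Proof.
move=> l0 w0; rewrite mulr_sumr [X in _ <= X](bigID (fun i => m < f i)) /=.
rewrite -[X in X <= _]addr0; apply: lerD; last first.
  by apply: sumr_ge0 => i _; rewrite mulr_ge0 ?expR_ge0 ?mulr_ge0.
apply: ler_sum => i mf; rewrite mulrCA -expRD -[X in X <= _]mulr1.
rewrite ler_wpM2l // -expR0 ler_expR -mulrN -mulrDr mulr_ge0 // addrC subr_ge0.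
exact: ltW.
Qed.

Lemma sum_predU_le {R : realType} {I : finType} (P Q1 Q2 : pred I) (w : I -> R) :
  (forall i, 0 <= w i) -> (forall i, P i -> Q1 i || Q2 i) ->
  \sum_(i | P i) w i <= \sum_(i | Q1 i) w i + \sum_(i | Q2 i) w i.
Proof.
move=> w0 PQ; rewrite big_mkcond [X in _ <= X + _]big_mkcond.
rewrite [X in _ <= _ + X]big_mkcond -big_split /=; apply: ler_sum => i _.
have := PQ i; have := w0 i.
by case: (P i); case: (Q1 i); case: (Q2 i) => //= ? ?; lra.
Qed.

Section binomial_tail.
Context {R : realType} {n : nat}.

(* Trials succeed with probability r, success being the value c of b i; letting
   c vary turns the lower tail of the successes into an upper tail of the
   failures (bern_weight_flip, bern_count_false). *)
Definition bern_weight (r : R) (c : bool) (b : {ffun 'I_n -> bool}) : R :=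
  \prod_i (if b i == c then r else 1 - r).

Definition bern_count (c : bool) (b : {ffun 'I_n -> bool}) : R :=
  \sum_i (b i == c)%:R.

Lemma bern_weight_ge0 r c b : 0 <= r <= 1 -> 0 <= bern_weight r c b.
Proof. by move=> /andP[? ?]; apply: prodr_ge0 => i _; case: ifP => _; lra. Qed.

Lemma bern_weight_flip r b : bern_weight r true b = bern_weight (1 - r) false b.
Proof. by apply: eq_bigr => i _; case: (b i) => /=; ring. Qed.

Lemma bern_count_ge0 c b : 0 <= bern_count c b.
Proof. by apply: sumr_ge0 => i _; exact: ler0n. Qed.

Lemma bern_count_le c b : bern_count c b <= n%:R.
Proof.
rewrite -[n in n%:R]card_ord -sum1_card natr_sum.
by apply: ler_sum => i _; case: (b i == c).
Qed.

Lemma bern_count_false b : bern_count false b = n%:R - bern_count true b.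
Proof.
rewrite -[n in n%:R]card_ord -sum1_card natr_sum -sumrB.
by apply: eq_bigr => i _; case: (b i); rewrite /= ?subrr ?subr0.
Qed.

Lemma sum_bern_weight_expR (r l : R) c :
  \sum_b bern_weight r c b * expR (l * bern_count c b)
  = (1 - r + r * expR l) ^+ n.
Proof.
transitivity (\sum_(b : {ffun 'I_n -> bool})
    \prod_i (if b i == c then r * expR l else 1 - r)).
  apply: eq_bigr => b _; rewrite mulr_sumr expR_sum -big_split /=.
  by apply: eq_bigr => i _; case: (b i == c); rewrite ?mulr1 ?mulr0 ?expR0 ?mulr1.
rewrite -(bigA_distr_bigA (fun i (j : bool) => if j == c then r * expR l else 1 - r)) /=.
rewrite (eq_bigr (fun _ => 1 - r + r * expR l)) ?prodr_const ?card_ord //.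
by move=> i _; rewrite big_bool; case: c => /=; ring.
Qed.

Lemma bern_mgf_le (r l : R) : 0 <= r <= 1 -> 0 <= l <= 1 / 2 ->
  1 - r + r * expR l <= expR (r * l + 2 * l ^+ 2).
Proof.
move=> /andP[r0 r1] hl; apply: le_trans (expR_ge1Dx _).
have := expR_le1DxDsqr _ hl; move: hl => /andP[l0 l1]; nra.
Qed.

Lemma bern_upper_tail (r s : R) c : 0 <= r <= 1 -> 0 <= s <= 2 ->
  \sum_(b | n%:R * r + n%:R * s < bern_count c b) bern_weight r c b
  <= expR (- (n%:R * s ^+ 2 / 8)).
Proof.
move=> hr /andP[s0 s2]; set l := s / 4.
have hl : 0 <= l <= 1 / 2 by apply/andP; split; rewrite /l; lra.
have [l0 _] := andP hl.
apply: le_trans (sum_tail_le_expR _ (bern_count c) l _ l0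
  (fun b => bern_weight_ge0 _ c b hr)) _.
have mgf0 : 0 <= 1 - r + r * expR l.
  by move: hr => /andP[? ?]; have := expR_ge0 l; nra.
have mgfn_le := lerXn2r n mgf0 (expR_ge0 _) (bern_mgf_le _ _ hr hl).
rewrite sum_bern_weight_expR; apply: le_trans (ler_wpM2l (expR_ge0 _) mgfn_le) _.
rewrite -expRM_natl -expRD ler_expR [leLHS](_ : _ = - (n%:R * s ^+ 2 / 8)) //.
by rewrite /l; field.
Qed.

Lemma bern_deviation (r s : R) : 0 <= r <= 1 -> 0 <= s ->
  \sum_(b | n%:R * s < `|bern_count true b - n%:R * r|) bern_weight r true b
  <= 2 * expR (- (n%:R * s ^+ 2 / 8)).
Proof.
move=> hr s0; have [s2|s2] := leP s 2; last first.
  rewrite big_pred0 ?mulr_ge0 ?expR_ge0 // => b; apply/negbTE; rewrite -leNgt.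
  have := bern_count_ge0 true b; have := bern_count_le true b.
  have := ler0n R n; move: hr => /andP[? ?].
  by rewrite ler_norml => ? ? ?; apply/andP; split; nra.
have s02 : 0 <= s <= 2 by apply/andP.
have hr' : 0 <= 1 - r <= 1 by move: hr => /andP[? ?]; apply/andP; split; lra.
apply: le_trans (sum_predU_le _
    (fun b => n%:R * r + n%:R * s < bern_count true b)
    (fun b => n%:R * (1 - r) + n%:R * s < bern_count false b)
    _ (fun b => bern_weight_ge0 _ true b hr) _) _.
  move=> b; rewrite bern_count_false ltr_normr => /orP[] ?; apply/orP.
  - by left; lra.
  - by right; lra.
under [X in _ + X <= _]eq_bigr do rewrite bern_weight_flip.
by rewrite mulr2n mulrDl mul1r lerD // bern_upper_tail.
Qed.

End binomial_tail.

Lemma content_bigsetU_le {d} {T : ringOfSetsType d} {R : realFieldType}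
    (mu : {content set T -> \bar R}) {I : finType} {Q : pred I} {F : I -> set T} :
  (forall i, measurable (F i)) ->
  (mu (\big[setU/set0]_(i | Q i) F i) <= \sum_(i | Q i) mu (F i))%E.
Proof.
move=> mF; pose K (A : set T) (x : \bar R) := measurable A /\ (mu A <= x)%E.
suff [] : K (\big[setU/set0]_(i | Q i) F i) (\sum_(i | Q i) mu (F i)) by [].
apply: (@big_rec2 _ _ K); first by split; rewrite ?measure0.
move=> i A x _ [mA muA]; split; first exact: measurableU.
exact: le_trans (measureU2 _ (mF i) mA) (leeD _ muA).
Qed.

Lemma preimage_pred_bigsetU {T : Type} {I : finType} (f : T -> I) (S : pred I) :
  [set w | S (f w)] = \big[setU/set0]_(b | S b) [set w | f w = b].
Proof.
apply/seteqP; split => [w Sw|]; first by rewrite (bigD1 (f w)) //=; left.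
apply: (big_ind (fun A => A `<=` [set w | S (f w)])) => //.
- by move=> A B AS BS w [/AS|/BS].
- by move=> b Sb w /= ->.
Qed.

Lemma measurable_bigcap_preimage {d} {T : measurableType d} {d'}
    {U : measurableType d'} {n : nat} {Z : 'I_n -> T -> U} {B : 'I_n -> set U} :
  (forall i, measurable_fun setT (Z i)) -> (forall i, measurable (B i)) ->
  measurable (\bigcap_(i in [set: 'I_n]) Z i @^-1` B i).
Proof.
move=> mZ mB; apply: fin_bigcap_measurable; first exact: finite_finset.
by move=> i _; rewrite -[_ @^-1` _]setTI; exact: mZ.
Qed.

Lemma iid_bigcap_prob {d} {T : measurableType d} {R : realType}
    {P : probability T R} {d'} {U : measurableType d'} {n : nat}
    {Z : 'I_n -> T -> U} {Z0 : T -> U} (B : 'I_n -> set U) :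
  mutually_independent P Z -> (forall i, same_law P (Z i) Z0) ->
  (forall i, measurable_fun setT (Z i)) -> (forall i, measurable (B i)) ->
  P (\bigcap_(i in [set: 'I_n]) Z i @^-1` B i)
  = (\prod_i fine (P (Z0 @^-1` B i)))%:E.
Proof.
move=> indZ lawZ mZ mB.
rewrite -(fineK (fin_num_measure P _ (measurable_bigcap_preimage mZ mB))).
by rewrite indZ //; congr EFin; apply: eq_bigr => i _; rewrite lawZ.
Qed.

Definition sign_pattern {T : Type} {R : realType} {n : nat}
  (Ys : 'I_n -> T -> R) (w : T) : {ffun 'I_n -> bool} := [ffun i => Ys i w == 1].

Lemma npos_sign_pattern {T : Type} {R : realType} {n : nat}
  (Ys : 'I_n -> T -> R) (w : T) :
  npos (fun i => Ys i w) = bern_count true (sign_pattern Ys w).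
Proof.
rewrite /npos big_mkcond; apply: eq_bigr => i _.
by rewrite ffunE; case: (Ys i w == 1).
Qed.

Section iid_sign_patterns.
Context {d} {T : measurableType d} {R : realType} {P : probability T R}.
Context {dX} {X : measurableType dX} {n : nat}.
Context {X0 : T -> X} {Y0 : T -> R} {Xs : 'I_n -> T -> X} {Ys : 'I_n -> T -> R}.
Hypothesis mY0 : measurable_fun setT Y0.
Hypothesis mXs : forall i, measurable_fun setT (Xs i).
Hypothesis mYs : forall i, measurable_fun setT (Ys i).
Hypothesis indXYs : mutually_independent P (fun i w => (Xs i w, Ys i w)).
Hypothesis lawXYs :
  forall i, same_law P (fun w => (Xs i w, Ys i w)) (fun w => (X0 w, Y0 w)).

Let q := fine (P [set w | Y0 w = 1]).

Let sign_set (c : bool) : set (X * R) := setT `*` [set y | (y == 1) = c].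

Let measurable_sign_set c : measurable (sign_set c).
Proof.
apply: measurableX => //; case: c.
- rewrite (_ : [set y | _] = [set 1]); first exact: measurable_set1.
  by apply/seteqP; split => y /= /eqP.
- rewrite (_ : [set y | _] = ~` [set 1]).
    by apply: measurableC; exact: measurable_set1.
  by apply/seteqP; split => y /=; [move/negbT/eqP | move/eqP/negbTE].
Qed.

Let measurable_XYs i : measurable_fun setT (fun w => (Xs i w, Ys i w)).
Proof. exact: measurable_fun_pair. Qed.

Let sign_pattern_preimage b : [set w | sign_pattern Ys w = b]
  = \bigcap_(i in [set: 'I_n]) (fun w => (Xs i w, Ys i w)) @^-1` sign_set (b i).
Proof.
apply/seteqP; split => w /=.
- by move=> <- i _; split => //=; rewrite ffunE.
- by move=> wb; apply/ffunP => i; rewrite ffunE; case: (wb i Logic.I).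
Qed.

Lemma prob_sign_pattern b :
  P [set w | sign_pattern Ys w = b] = (bern_weight q true b)%:E.
Proof.
rewrite sign_pattern_preimage (iid_bigcap_prob _ indXYs lawXYs) //.
congr EFin; apply: eq_bigr => i _.
have mY1 : measurable [set w | Y0 w = 1].
  by rewrite -[X in measurable X]setTI; exact: mY0 (measurable_set1 _).
have PY1 : P [set w | Y0 w = 1] = q%:E by rewrite fineK ?fin_num_measure.
rewrite /sign_set; case: (b i) => /=.
- rewrite (_ : _ @^-1` _ = [set w | Y0 w = 1]) ?PY1 //.
  by apply/seteqP; split => [w /= [_ /eqP] | w /= ->] //; rewrite eqxx.
- rewrite (_ : _ @^-1` _ = ~` [set w | Y0 w = 1]) ?probability_setC ?PY1 //.
  by apply/seteqP; split => [w /= [_ /negbT/eqP] | w /= /eqP/negbTE].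
Qed.

Lemma measurable_sign_pattern_in (S : pred {ffun 'I_n -> bool}) :
  measurable [set w | S (sign_pattern Ys w)].
Proof.
rewrite preimage_pred_bigsetU; apply: bigsetU_measurable => b _.
by rewrite sign_pattern_preimage; exact: measurable_bigcap_preimage.
Qed.

Lemma prob_sign_pattern_in_le (S : pred {ffun 'I_n -> bool}) :
  (P [set w | S (sign_pattern Ys w)]
   <= (\sum_(b | S b) bern_weight q true b)%:E)%E.
Proof.
rewrite preimage_pred_bigsetU; apply: le_trans (content_bigsetU_le P _) _.
  by move=> b; rewrite sign_pattern_preimage; exact: measurable_bigcap_preimage.
by rewrite (eq_bigr _ (fun b _ => prob_sign_pattern b)) sumEFin.
Qed.

End iid_sign_patterns.

Lemma plugin_ratio_dist_le {R : realFieldType} (a S N m r e s : R) :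
  0 <= a -> 0 <= S <= N -> 0 < m -> 0 < e <= r -> `|N - m * r| <= m * s ->
  `|a / N * S - a / r * (1 / m) * S| <= a * s / e.
Proof.
move=> a0 /andP[S0 SN] m0 /andP[e0 er] dev.
have r0 : 0 < r by apply: lt_le_trans er.
have s0 : 0 <= s by rewrite -(pmulr_rge0 _ m0); apply: le_trans dev.
have [N0|N0] := eqVneq N 0.
  have -> : S = 0 by apply/eqP; rewrite eq_le S0 -N0 SN.
  by rewrite !mulr0 subr0 normr0 !mulr_ge0 ?invr_ge0 // ltW.
have {N0}N0 : 0 < N by rewrite lt_def N0 (le_trans S0).
have mr0 : 0 < m * r := mulr_gt0 m0 r0.
have SN0 : 0 <= S / N := divr_ge0 S0 (ltW N0).
rewrite (_ : _ - _ = a * (S / N) * ((m * r - N) / (m * r))); last first.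
  by field; rewrite !gt_eqF.
rewrite normrM (ger0_norm (mulr_ge0 a0 SN0)) normrM normfV (gtr0_norm mr0).
rewrite distrC -mulrA -[a * s / e]mulrA ler_wpM2l // -[s / e]mul1r.
apply: ler_pM => //; first by rewrite divr_ge0 // ltW.
  by rewrite ler_pdivrMr // mul1r.
rewrite ler_pdivrMr // (le_trans dev) // (_ : s / e * (m * r) = m * s * (r / e)).
  by apply: ler_peMr; rewrite ?mulr_ge0 ?ler_pdivlMr ?mul1r // ltW.
by field; rewrite gt_eqF.
Qed.

Section plugin_estimate.
Context {X : Type} {R : realType} {n : nat} {Xs : 'I_n -> X} {Ys : 'I_n -> R}.
Hypothesis Ys_sign : forall i, Ys i = 1 \/ Ys i = -1.

Let nneg_sum : nneg Ys = \sum_(i < n | Ys i == -1) 1.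
Proof.
rewrite /nneg /npos -[n in n%:R]card_ord -sum1_card natr_sum.
rewrite (bigID (fun i => Ys i == 1)) /= addrC addrK; apply: eq_bigl => i.
have N1_neq1 : (-1 == 1 :> R) = false by apply/negbTE/eqP => ?; lra.
by case: (Ys_sign i) => ->; rewrite eqxx ?N1_neq1 // eq_sym N1_neq1.
Qed.

Lemma Rtilde_dist_le (g : X -> R) (p q e s : R) :
  0 <= p -> (0 < n)%N -> 0 < e -> e <= q <= 1 - e ->
  `|npos Ys - n%:R * q| <= n%:R * s ->
  `|Rtilde_what p Xs Ys g - Rtilde_w p q Xs Ys g| <= (2 * p + 1) * s / e.
Proof.
move=> p0 n0 e0 /andP[e_le_q q_le] dev.
have e_le_1q : e <= 1 - q by lra.
have m0 : 0 < n%:R :> R by rewrite ltr0n.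
have Spos_le : 0 <= Spos Xs Ys g <= npos Ys.
  by rewrite sumr_ge0 //= ler_sum // => i _; case: (_ == _).
have Sneg_le : 0 <= Sneg Xs Ys g <= nneg Ys.
  by rewrite nneg_sum sumr_ge0 //= ler_sum // => i _; case: (_ == _).
have dev' : `|nneg Ys - n%:R * (1 - q)| <= n%:R * s.
  by rewrite /nneg (_ : _ - _ = - (npos Ys - n%:R * q)) ?normrN //; ring.
rewrite /Rtilde_what /Rtilde_w opprD addrACA.
rewrite (_ : (2 * p + 1) * s / e = 2 * p * s / e + 1 * s / e); last by ring.
apply: le_trans (ler_normD _ _) (lerD _ _).
- by apply: plugin_ratio_dist_le; rewrite ?mulr_ge0 ?e0.
- by apply: plugin_ratio_dist_le; rewrite ?ler01 ?e0.
Qed.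

End plugin_estimate.

Lemma ln_2_div_gt0 {R : realType} (delta : R) : 0 < delta < 1 -> 0 < ln (2 / delta).
Proof. by move=> /andP[d0 d1]; rewrite ln_gt0 // ltr_pdivlMr // mul1r; lra. Qed.

Lemma chernoff_radius_le {R : realType} (n : nat) (eps delta : R) :
  0 < eps < 1 / 2 -> 0 < delta < 1 -> (0 < n)%N ->
  2 * expR (- (n%:R * (2 * Num.sqrt (ln (2 / delta) / (2 * n%:R)) / eps) ^+ 2 / 8))
  <= delta.
Proof.
move=> /andP[e0 e1] delta01 n0; have L0 := ln_2_div_gt0 _ delta01.
move: delta01 => /andP[d0 d1]; set L := ln (2 / delta) in L0 *.
rewrite expr_div_n exprMn sqr_sqrtr; last by rewrite divr_ge0 ?mulr_ge0 // ltW.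
apply: le_trans (_ : 2 * expR (- L) <= _).
  rewrite ler_pM2l // ler_expR lerN2 (_ : _ / 8 = L / (4 * eps ^+ 2)).
    rewrite ler_pdivlMr ?mulr_gt0 ?exprn_gt0 //.
    have : 4 * eps ^+ 2 <= 1 by nra.
    nra.
  by field; rewrite !gt_eqF ?ltr0n.
by rewrite expRN lnK ?posrE ?divr_gt0 // invf_div mulrCA divff ?mulr1.
Qed.

Theorem lemma4 (R : realType)
  (dO : measure_display) (Omega : measurableType dO) (P : probability Omega R)
  (dX : measure_display) (X : measurableType dX)
  (G : set (X -> R))
  (p : R) (n : nat)
  (X0 : Omega -> X) (Y0 : Omega -> R)
  (Xs : 'I_n -> Omega -> X) (Ys : 'I_n -> Omega -> R)
  (eps delta : R) :
  (forall g, G g -> measurable_fun setT g /\ (forall x, g x = 1 \/ g x = -1)) ->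
  0 < p < 1 ->
  measurable_fun setT X0 -> measurable_fun setT Y0 ->
  (forall w, Y0 w = 1 \/ Y0 w = -1) ->
  (forall i, measurable_fun setT (Xs i)) ->
  (forall i, measurable_fun setT (Ys i)) ->
  (forall i w, Ys i w = 1 \/ Ys i w = -1) ->
  mutually_independent P (fun i w => (Xs i w, Ys i w)) ->
  (forall i, same_law P (fun w => (Xs i w, Ys i w)) (fun w => (X0 w, Y0 w))) ->
  let q := fine (P [set w | Y0 w = 1]) in
  0 < eps < 1 / 2 ->
  eps < q < 1 - eps ->
  0 < delta < 1 ->
  2 * ln (2 / delta) / eps ^+ 2 <= n%:R ->
  exists A : set Omega, measurable A /\ ((1 - delta)%:E <= P A)%E /\
    forall w, A w -> forall g, G g ->
      `| Rtilde_what p (fun i => Xs i w) (fun i => Ys i w) g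
         - Rtilde_w p q (fun i => Xs i w) (fun i => Ys i w) g |
      <= 2 * (2 * p + 1) / eps ^+ 2 * Num.sqrt (ln (2 / delta) / (2 * n%:R)).
Proof.
(* The bound holds for every g, so nothing about G, X0 or the values of Y0 is used. *)
move=> _ /andP[p0 _] _ mY0 _ mXs mYs Ys_sign indXYs lawXYs q heps /andP[e_q q_e]
  delta01 n_large.
have [e0 _] := andP heps.
have n0 : (0 < n)%N.
  rewrite -(ltr0n R); apply: lt_le_trans n_large.
  by rewrite divr_gt0 ?exprn_gt0 ?mulr_gt0 ?(ln_2_div_gt0 _ delta01).
set s := 2 * Num.sqrt (ln (2 / delta) / (2 * n%:R)) / eps.
have s0 : 0 <= s by rewrite divr_ge0 ?mulr_ge0 ?sqrtr_ge0 // ltW.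
pose bad (b : {ffun 'I_n -> bool}) := n%:R * s < `|bern_count true b - n%:R * q|.
have mbad := measurable_sign_pattern_in mXs mYs bad.
exists (~` [set w | bad (sign_pattern Ys w)]); split; [|split].
- exact: measurableC.
- rewrite probability_setC // EFinB leeB //.
  apply: le_trans (prob_sign_pattern_in_le mY0 mXs mYs indXYs lawXYs bad) _.
  rewrite lee_fin (le_trans (bern_deviation _ _ _ s0)) ?chernoff_radius_le //.
  by apply/andP; split; lra.
- move=> w /negP; rewrite /bad -leNgt -npos_sign_pattern => dev g _.
  rewrite (_ : _ * Num.sqrt _ = (2 * p + 1) * s / eps); last first.
    by rewrite /s; field; rewrite gt_eqF.
  apply: (Rtilde_dist_le (Ys_sign^~ w)) => //; first exact: ltW.
  by rewrite !ltW.
Qed.
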